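(* Let $V$ be a vector configuration and $W\subseteq V$ a subconfiguration such that $\operatorname{lin}(W)\cap V=W$ (i.e. the elements of $V$ lying in $\operatorname{lin}(W)$ are exactly those of $W$). Then $\mathrm{DD}(V)\ge\mathrm{DD}(W)+\mathrm{DD}(V/W)$.
   Context: A vector configuration is a finite family (repetitions allowed) $V$ of vectors in $\mathbb{R}^r$; a subconfiguration is a subfamily, and cardinalities count multiplicities. The quotient $V/W$ is the vector configuration in $\mathbb{R}^r/\operatorname{lin}(W)$ formed by the images of the elements of $V\setminus W$ under the canonical projection. Covector discrepancy: for a configuration $U$ in a real vector space $E$, $\mathrm{DD}(U)=\max_f\big|\,|\{u\in U: f(u)>0\}|-|\{u\in U:f(u)<0\}|\,\big|$ over all linear functionals $f$ on $E$. *)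

From HB Require Import structures.
From mathcomp Require Import all_boot all_order all_algebra.
From mathcomp Require Import boolp reals.
Set Implicit Arguments. Unset Strict Implicit. Unset Printing Implicit Defensive.
Import Order.TTheory GRing.Theory Num.Theory.
Local Open Scope ring_scope.

(* A vector configuration in R^d is a finite family (seq) of row vectors.
   A linear functional on R^d is u |-> (u *m c) 0 0 for c : 'cV_d
   (every linear functional has this form). *)
Definition lfun (R : realType) (d : nat) (c : 'cV[R]_d) (u : 'rV[R]_d) : R :=
  (u *m c) ord0 ord0.

Definition npos (R : realType) (d : nat) (U : seq 'rV[R]_d) (c : 'cV[R]_d) : nat :=
  count (fun u => 0 < lfun c u) U.
Definition nneg (R : realType) (d : nat) (U : seq 'rV[R]_d) (c : 'cV[R]_d) : nat :=
  count (fun u => lfun c u < 0) U.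

(* | #pos - #neg | (absolute difference of naturals) *)
Definition disc (R : realType) (d : nat) (U : seq 'rV[R]_d) (c : 'cV[R]_d) : nat :=
  ((npos U c - nneg U c) + (nneg U c - npos U c))%N.

(* covector discrepancy DD(U) = max over functionals of disc; the values of
   disc are bounded by size U, so this maximum over 0..size U is the max. *)
Definition DD (R : realType) (d : nat) (U : seq 'rV[R]_d) : nat :=
  \max_(k < (size U).+1 | `[< exists c : 'cV[R]_d, disc U c = k >]) k.

Definition lin (R : realType) (d : nat) (W : seq 'rV[R]_d) : 'M[R]_d :=
  (\sum_(w <- W) <<w>>)%MS.

From HB Require Import structures.
From mathcomp Require Import all_boot all_order all_algebra.
From mathcomp Require Import boolp reals.
From mathcomp Require Import lra zify.
Set Implicit Arguments. Unset Strict Implicit. Unset Printing Implicit Defensive.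
Import Order.TTheory GRing.Theory Num.Theory.
Local Open Scope ring_scope.

(* Choose a functional [d] on the quotient attaining DD(V/W) that vanishes on
   no element of V/W (the elements of V \ W do not lie in lin(W), so their
   images are nonzero), and a functional [cW] on R^r attaining DD(W).  Pulled
   back along the quotient map, [d] vanishes on W and is nonzero on V \ W;
   adding a small multiple of [cW] fixes the signs on V \ W and gives the signs
   of [cW] on W.  The discrepancy of this functional on V is then the sum
   DD(W) + DD(V/W). *)

Lemma big_mask_negb (M : nmodType) (T : Type) (F : T -> M) (m : bitseq)
    (s : seq T) :
  size m = size s ->
  \sum_(x <- s) F x = \sum_(x <- mask m s) F x + \sum_(x <- mask (map negb m) s) F x.
Proof.
elim: s m => [|x s IHs] [|b m] //=; first by rewrite !big_nil addr0.
case=> /IHs {}IHs; rewrite big_cons IHs.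
by case: b; rewrite /= !big_cons; [rewrite addrA | rewrite addrCA].
Qed.

Lemma mem_mask_negb_nth (T : eqType) (x0 : T) (m : bitseq) (s : seq T) x :
  size m = size s -> x \in mask (map negb m) s ->
  exists i, [/\ (i < size s)%N, nth x0 s i = x & nth false m i = false].
Proof.
elim: s m => [|y s IHs] [|b m] //= [/IHs {}IHs].
case: b => /=; first by case/IHs=> i []; exists i.+1.
rewrite in_cons => /predU1P[->|]; first by exists 0%N.
by case/IHs=> i []; exists i.+1.
Qed.

Lemma sub_lin (R : realType) (r : nat) (W : seq 'rV[R]_r) w :
  w \in W -> (w <= lin W)%MS.
Proof.
rewrite /lin; elim: W => [|a W IHW] //; rewrite in_cons big_cons.
case/predU1P=> [->|/IHW wW]; first by apply: submx_trans (addsmxSl _ _); rewrite genmxE.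
exact: submx_trans wW (addsmxSr _ _).
Qed.

Lemma sgr_addr_small (R : realDomainType) (x z : R) :
  `|z| < `|x| -> Num.sg (x + z) = Num.sg x.
Proof.
case: (ltrgtP x 0) => [x_lt0|x_gt0|->]; last by rewrite normr0 ltNge normr_ge0.
- by rewrite (ltr0_norm x_lt0) ltr_norml => /andP[? ?]; rewrite !ltr0_sg //; lra.
- by rewrite (gtr0_norm x_gt0) ltr_norml => /andP[? ?]; rewrite !gtr0_sg //; lra.
Qed.

Section Discrepancy.
Variables (R : realType) (d : nat).
Implicit Types (U : seq 'rV[R]_d) (a b c : 'cV[R]_d) (u : 'rV[R]_d).

Lemma lfunN c u : lfun (- c) u = - lfun c u.
Proof. by rewrite /lfun mulmxN mxE. Qed.

Lemma lfunD a b u : lfun (a + b) u = lfun a u + lfun b u.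
Proof. by rewrite /lfun mulmxDr mxE. Qed.

Lemma lfunZ (e : R) c u : lfun (e *: c) u = e * lfun c u.
Proof. by rewrite /lfun -scalemxAr mxE. Qed.

Lemma lfun0 u : lfun 0 u = 0.
Proof. by rewrite /lfun mulmx0 mxE. Qed.

Lemma lfun_mulmx (s : nat) (Q : 'M[R]_(d, s)) (c : 'cV[R]_s) u :
  lfun (Q *m c) u = lfun c (u *m Q).
Proof. by rewrite /lfun mulmxA. Qed.

Definition sgsum U c : R := \sum_(u <- U) Num.sg (lfun c u).

Lemma sgsumE U c : sgsum U c = (npos U c)%:R - (nneg U c)%:R.
Proof.
rewrite /sgsum /npos /nneg; elim: U => [|u U IHU]; first by rewrite big_nil subrr.
rewrite big_cons IHU /= !natrD.
case: (ltrgtP (lfun c u) 0) => [lt0|gt0|->].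
- by rewrite ltr0_sg //=; lra.
- by rewrite gtr0_sg //=; lra.
- by rewrite sgr0 /=; lra.
Qed.

Lemma sgsumN U c : sgsum U (- c) = - sgsum U c.
Proof. by rewrite /sgsum -sumrN; apply: eq_bigr => u _; rewrite lfunN sgrN. Qed.

Lemma disc_sgsum U c : (disc U c)%:R = `|sgsum U c|.
Proof.
rewrite sgsumE /disc natrD.
case: (leqP (npos U c) (nneg U c)) => [le_pn|lt_np].
- rewrite (eqP (le_pn : npos U c - nneg U c == 0)%N) add0r natrB //.
  by rewrite ler0_norm ?opprB // subr_le0 ler_nat.
- rewrite (eqP (ltnW lt_np : nneg U c - npos U c == 0)%N) addr0 natrB ?(ltnW lt_np) //.
  by rewrite ger0_norm // subr_ge0 ler_nat (ltnW lt_np).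
Qed.

Lemma disc_le_size U c : (disc U c <= size U)%N.
Proof.
rewrite /disc /npos /nneg.
have := count_size (fun u => 0 < lfun c u) U.
have := count_size (fun u => lfun c u < 0) U.
lia.
Qed.

Lemma disc_le_DD U c : (disc U c <= DD U)%N.
Proof.
have lt_disc : (disc U c < (size U).+1)%N by rewrite ltnS disc_le_size.
apply: (@leq_bigmax_cond _ _ (fun k : 'I__ => nat_of_ord k) (Ordinal lt_disc)).
by apply/asboolP; exists c.
Qed.

Lemma DD_attained U : exists c, disc U c = DD U.
Proof.
rewrite /DD; have [|k /asboolP + ->] := eq_bigmax_cond (fun k : 'I__ => nat_of_ord k)
  (_ : 0 < #|fun k : 'I_(size U).+1 => `[< exists c, disc U c = k >]|)%N => //.
apply/card_gt0P; exists ord0; rewrite unfold_in /=; apply/asboolP; exists 0.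
rewrite /disc /npos /nneg !(eq_count (a2 := pred0)) ?count_pred0 // => u;
  by rewrite lfun0 ltxx.
Qed.

Lemma DD_sgsum U : exists c, sgsum U c = (DD U)%:R.
Proof.
have [c] := DD_attained U; move/(congr1 (GRing.natmul (1 : R))).
rewrite disc_sgsum; case: (lerP 0 (sgsum U c)) => [ge0|lt0].
- by exists c; rewrite -(ger0_norm ge0).
- by exists (- c); rewrite sgsumN -(ltr0_norm lt0).
Qed.

(* Quantifying over all [e'] below [e] is what lets the induction on [U] take
   the minimum of the thresholds. *)
Lemma sg_lfun_perturb_le U a b :
  exists2 e, 0 < e & forall e', 0 < e' -> e' <= e -> {in U, forall u,
    Num.sg (lfun (a + e' *: b) u) =
    if lfun a u == 0 then Num.sg (lfun b u) else Num.sg (lfun a u)}.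
Proof.
elim: U => [|u U [e e_gt0 IHU]]; first by exists 1; first exact: ltr01.
pose eu := if lfun a u == 0 then 1 else `|lfun a u| / (`|lfun b u| + 1).
have b1_gt0 : 0 < `|lfun b u| + 1 by have := normr_ge0 (lfun b u); lra.
have eu_gt0 : 0 < eu.
  by rewrite /eu; case: eqP => [//|/eqP au0]; rewrite divr_gt0 ?normr_gt0.
exists (Num.min e eu); first by rewrite lt_min e_gt0 eu_gt0.
move=> e' e'_gt0; rewrite le_min => /andP[le_e le_eu] v.
case/predU1P=> [->|/IHU-> //]; rewrite lfunD lfunZ.
case: eqP => [->|/eqP au0]; first by rewrite add0r sgrM gtr0_sg ?mul1r.
apply: sgr_addr_small; rewrite normrM gtr0_norm //.
move: le_eu; rewrite /eu (negbTE au0) ler_pdivlMr // mulrDr mulr1; lra.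
Qed.

Lemma sg_lfun_perturb U a b :
  exists2 e, 0 < e & {in U, forall u,
    Num.sg (lfun (a + e *: b) u) =
    if lfun a u == 0 then Num.sg (lfun b u) else Num.sg (lfun a u)}.
Proof. by have [e e_gt0 Pe] := sg_lfun_perturb_le U a b; exists e; last exact: Pe. Qed.

Lemma lfun_nonvanishing U : {in U, forall u, u != 0} ->
  exists g, {in U, forall u, lfun g u != 0}.
Proof.
elim: U => [|v U IHU] nzU; first by exists 0.
have [g gU] : exists g, {in U, forall u, lfun g u != 0}.
  by apply: IHU => u uU; apply: nzU; rewrite in_cons uU orbT.
have [j vj] := rV0Pn _ (nzU v (mem_head _ _)).
have lfun_delta u : lfun (delta_mx j 0) u = u 0 j by rewrite /lfun -colE mxE.
have [e _ Pe] := sg_lfun_perturb (v :: U) g (delta_mx j 0).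
exists (g + e *: delta_mx j 0) => u uU; rewrite -sgr_eq0 Pe // lfun_delta.
case: (lfun g u =P 0) => [gu0|/eqP]; last by rewrite sgr_eq0.
move: uU; rewrite in_cons => /predU1P[->|uU]; first by rewrite sgr_eq0.
by move: (gU u uU); rewrite gu0 eqxx.
Qed.

(* The elements on which a maximizer [c] vanishes can be given the signs of a
   nonvanishing [g], or of [- g], whichever does not decrease the sum. *)
Lemma DD_nonvanishing U : {in U, forall u, u != 0} ->
  exists c, (DD U)%:R <= sgsum U c /\ {in U, forall u, lfun c u != 0}.
Proof.
move=> nzU; have [c0 c0U] := DD_sgsum U; have [g gU] := lfun_nonvanishing nzU.
pose tie h := \sum_(u <- U) (if lfun c0 u == 0 then Num.sg (lfun h u) else 0).
have [h [tie_ge0 hU]] : exists h, 0 <= tie h /\ {in U, forall u, lfun h u != 0}.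
  have tieN : tie (- g) = - tie g.
    rewrite /tie -sumrN; apply: eq_bigr => u _.
    by rewrite lfunN sgrN; case: ifP; rewrite ?oppr0.
  case: (lerP 0 (tie g)) => [|lt0]; first by exists g.
  by exists (- g); rewrite tieN oppr_ge0 ltW //; split=> // u /gU; rewrite lfunN oppr_eq0.
have [e _ Pe] := sg_lfun_perturb U c0 h.
exists (c0 + e *: h); split.
- suff -> : sgsum U (c0 + e *: h) = sgsum U c0 + tie h by rewrite c0U; lra.
  rewrite /sgsum /tie -big_split; apply: eq_big_seq => u uU; rewrite Pe //=.
  by case: (lfun c0 u =P 0) => [->|_]; rewrite ?sgr0 ?add0r ?addr0.
- move=> u uU; rewrite -sgr_eq0 Pe //.
  by case: (lfun c0 u =P 0) => [_|/eqP]; rewrite sgr_eq0 ?hU.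
Qed.

End Discrepancy.

Unset Implicit Arguments.
Theorem mainTheorem11 (R : realType) (r : nat) (V : seq 'rV[R]_r) (m : bitseq)
    (s : nat) (Q : 'M[R]_(r, s)) :
  size m = size V ->
  (forall i, (i < size V)%N -> (nth 0 V i <= lin (mask m V))%MS -> nth false m i) ->
  (kermx Q == lin (mask m V))%MS ->
  row_full Q ->
  (DD (mask m V) + DD [seq v *m Q | v <- mask (map negb m) V] <= DD V)%N.
Proof.
move=> size_m linW_sat /andP[ker_linW linW_ker] _.
set W := mask m V; set V' := mask (map negb m) V; set X := [seq v *m Q | v <- V'].
have QW0 w : w \in W -> w *m Q = 0.
  by move=> wW; apply/sub_kermxP; exact: submx_trans (sub_lin wW) linW_ker.
have nzX : {in X, forall x, x != 0}.
  move=> _ /mapP[v vV' ->]; apply: contraTneq isT => /sub_kermxP vQ0.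
  have [i [lt_i vi mi]] := mem_mask_negb_nth 0 size_m vV'.
  suff : nth false m i by rewrite mi.
  by rewrite linW_sat // vi (submx_trans vQ0 ker_linW).
have [dX [dX_max dX_nz]] := DD_nonvanishing nzX.
have [cW cW_max] := DD_sgsum W.
have [e _ Pe] := sg_lfun_perturb V (Q *m dX) cW.
set c := Q *m dX + e *: cW.
have sgsumW : sgsum W c = sgsum W cW.
  apply: eq_big_seq => w wW; rewrite Pe ?(mem_mask wW) //.
  by rewrite lfun_mulmx QW0 // /lfun mul0mx mxE eqxx.
have sgsumV' : sgsum V' c = sgsum X dX.
  rewrite /sgsum big_map; apply: eq_big_seq => v vV'; rewrite Pe ?(mem_mask vV') //.
  by rewrite lfun_mulmx (negbTE (dX_nz _ (map_f _ vV'))).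
apply: leq_trans (disc_le_DD V c).
rewrite -(ler_nat R) natrD disc_sgsum (le_trans _ (ler_norm _)) //.
by rewrite /sgsum (big_mask_negb _ size_m) -/(sgsum W c) -/(sgsum V' c) sgsumW sgsumV' cW_max; lra.
Qed.
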